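(* Consider Phase-1 training with learning rate $\alpha>0$ on a fixed batch of size $N$, fix $a_\star\in(0,1]$, and let $T_\star := \min\{t : |a_t| \ge a_\star\}$. Let $q_\star := c_0/\sqrt N > 0$. Assume \[ \mathrm{sign}(a_0) = \mathrm{sign}(q_0), \qquad |q_0| \ge q_\star, \] and the stability condition $\alpha a_\star\|\widehat M\|_2 \le \frac12$. Then for all $t < T_\star$ we have $\mathrm{sign}(a_t) = \mathrm{sign}(q_t) = \mathrm{sign}(q_0)$ and $|q_t| \ge |q_0| \ge q_\star$. Consequently, \[ T_\star \le \left\lceil \frac{2(a_\star - |a_0|)_+}{\alpha q_\star}\right\rceil . \]
   Context: $\widehat M := \frac1N\sum_{s=1}^N y^{(s)}x^{(s)}x^{(s)\top}$ for samples $x^{(s)}\in\{\pm1\}^d$, $y^{(s)} = x^{(s)}_1x^{(s)}_2$. Phase-1 updates: $a_{t+1} = \mathrm{clip}_{[-1,1]}(a_t + \frac\alpha2 q_t)$, $w_{t+1} = \frac{w_t + \alpha a_t\widehat M w_t}{\|w_t + \alpha a_t\widehat M w_t\|_2}$, $q_t := w_t^\top\widehat M w_t$, with $w_0$ a unit vector. $c_0>0$ is a constant (in the paper, $c_0\in(0,\sqrt3/2)$ from the lower bound $\Pr[|q_0|\ge c_0/\sqrt N]\ge p_{PZ}(c_0)$). $(z)_+ = \max\{z,0\}$. *)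

From HB Require Import structures.
From mathcomp Require Import all_boot all_order all_algebra.
From mathcomp Require Import classical_sets reals.
Set Implicit Arguments. Unset Strict Implicit. Unset Printing Implicit Defensive.
Import Order.TTheory GRing.Theory Num.Theory.
Local Open Scope ring_scope.
Local Open Scope classical_set_scope.

Section Phase1.
Variable R : realType.

Definition norm2 (d : nat) (v : 'cV[R]_d) : R :=
  Num.sqrt (\sum_(i < d) v i 0 ^+ 2).

Definition opnorm2 (d : nat) (A : 'M[R]_d) : R :=
  sup [set norm2 (A *m v) | v in [set v : 'cV[R]_d | norm2 v = 1]].

Definition pm1_samples (d N : nat) (x : 'I_N -> 'cV[R]_d) : Prop :=
  forall s i, x s i 0 = 1 \/ x s i 0 = -1.

(* Labels y^(s) = x^(s)_1 x^(s)_2 (first two coordinates; needs 1 < d). *)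
Definition label (d N : nat) (hd : (1 < d)%N) (x : 'I_N -> 'cV[R]_d) (s : 'I_N) : R :=
  x s (Ordinal (ltn_trans (ltnSn 0) hd)) 0 * x s (Ordinal hd) 0.

Definition Mhat (d N : nat) (hd : (1 < d)%N) (x : 'I_N -> 'cV[R]_d) : 'M[R]_d :=
  N%:R^-1 *: \sum_(s < N) (label hd x s *: (x s *m (x s)^T)).

Definition rayq (d : nat) (M : 'M[R]_d) (w : 'cV[R]_d) : R := ((w^T *m M *m w) 0 0).

Definition clip1 (z : R) : R := Num.max (-1) (Num.min 1 z).

Definition posp (z : R) : R := Num.max z 0.

Fixpoint phase1 (d : nat) (M : 'M[R]_d) (alpha a0 : R) (w0 : 'cV[R]_d) (t : nat)
  : R * 'cV[R]_d :=
  match t with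
  | 0 => (a0, w0)
  | t'.+1 =>
      let aw := phase1 M alpha a0 w0 t' in
      let a := aw.1 in let w := aw.2 in
      let u := w + (alpha * a) *: (M *m w) in
      (clip1 (a + alpha / 2 * rayq M w), (norm2 u)^-1 *: u)
  end.

Definition a_ (d : nat) M alpha a0 (w0 : 'cV[R]_d) t := (phase1 M alpha a0 w0 t).1.
Definition w_ (d : nat) M alpha a0 (w0 : 'cV[R]_d) t := (phase1 M alpha a0 w0 t).2.
Definition q_ (d : nat) M alpha a0 (w0 : 'cV[R]_d) t := rayq M (w_ M alpha a0 w0 t).

End Phase1.

From HB Require Import structures.
From mathcomp Require Import all_boot all_order all_algebra.
From mathcomp Require Import classical_sets reals.
From mathcomp Require Import ring lra.
Import Order.TTheory GRing.Theory Num.Theory.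
Set Implicit Arguments. Unset Strict Implicit.
Local Open Scope ring_scope.

(* Write s_t = alpha a_t.  One Phase-1 step replaces w by the normalisation of
   u = w + s M w.  Splitting M w = q w + v with v orthogonal to w gives
   u.u = (1 + s q)^2 + s^2 v.v  and  u.Mu - q u.u = s^2 ((2 + s q) v.v + s v.Mv),
   and |s| ||M|| <= 1/2 makes the bracket at least v.v >= 0: the step never
   decreases s q.  So as long as |a_t| < a_star <= 1, a_t and q_t keep the sign
   of q_0, |q_t| >= |q_0| >= q_star, the clipping is inactive and |a_t| grows by
   at least alpha q_star / 2 per step; hence |a| reaches a_star within
   ceil(2 (a_star - |a_0|)_+ / (alpha q_star)) steps. *)

Section Dot.
Variables (R : comNzRingType) (d : nat).
Implicit Types (a b c : 'cV[R]_d) (M : 'M[R]_d).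

Definition dot a b : R := (a^T *m b) 0 0.

Lemma dotE a b : dot a b = \sum_i a i 0 * b i 0.
Proof. by rewrite /dot mxE; apply: eq_bigr => i _; rewrite mxE. Qed.

Lemma dot0l b : dot 0 b = 0.
Proof. by rewrite dotE big1 // => i _; rewrite mxE mul0r. Qed.

Lemma dotC a b : dot a b = dot b a.
Proof. by rewrite !dotE; apply: eq_bigr => i _; rewrite mulrC. Qed.

Lemma dotDl a b c : dot (a + b) c = dot a c + dot b c.
Proof. by rewrite /dot linearD /= mulmxDl mxE. Qed.

Lemma dotDr a b c : dot a (b + c) = dot a b + dot a c.
Proof. by rewrite /dot mulmxDr mxE. Qed.

Lemma dotZl k a b : dot (k *: a) b = k * dot a b.
Proof. by rewrite /dot linearZ /= -scalemxAl mxE. Qed.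

Lemma dotZr k a b : dot a (k *: b) = k * dot a b.
Proof. by rewrite /dot -scalemxAr mxE. Qed.

Lemma dotNl a b : dot (- a) b = - dot a b.
Proof. by rewrite -scaleN1r dotZl mulN1r. Qed.

Lemma dotNr a b : dot a (- b) = - dot a b.
Proof. by rewrite -scaleN1r dotZr mulN1r. Qed.

Lemma dot_mulmx_sym M a b : M^T = M -> dot a (M *m b) = dot (M *m a) b.
Proof. by move=> M_sym; rewrite /dot trmx_mul M_sym mulmxA. Qed.

Section PowerStep.
Variables (M : 'M[R]_d) (w : 'cV[R]_d) (s : R).
Hypotheses (M_sym : M^T = M) (w_unit : dot w w = 1).
Let q := dot w (M *m w).
Let u := w + s *: (M *m w).
Let v := M *m w - q *: w.

Let dot_Mw_w : dot (M *m w) w = q.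
Proof. by rewrite dotC. Qed.

Let dot_w_MMw : dot w (M *m (M *m w)) = dot (M *m w) (M *m w).
Proof. by rewrite dot_mulmx_sym. Qed.

Lemma power_step_dot_self : dot u u = (1 + s * q) ^+ 2 + s ^+ 2 * dot v v.
Proof.
rewrite /u /v !(dotDl, dotDr, dotNl, dotNr, dotZl, dotZr) w_unit dot_Mw_w.
rewrite (dotC w (M *m w)) dot_Mw_w; ring.
Qed.

Lemma power_step_rayleigh :
  dot u (M *m u) - q * dot u u = s * ((2 + s * q) * dot v v + s * dot v (M *m v)).
Proof.
rewrite /u /v !mulmxDr mulmxN -!scalemxAr !(dotDl, dotDr, dotNl, dotNr, dotZl, dotZr).
rewrite w_unit dot_Mw_w (dotC w (M *m w)) dot_Mw_w dot_w_MMw; ring.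
Qed.

End PowerStep.
End Dot.

Section DotOrder.
Variables (R : realFieldType) (d : nat).
Implicit Types (a b : 'cV[R]_d).

Lemma dot_self_ge0 a : 0 <= dot a a.
Proof. by rewrite dotE sumr_ge0 // => i _; rewrite -expr2 sqr_ge0. Qed.

Lemma dot_self_eq0 a : (dot a a == 0) = (a == 0).
Proof.
apply/eqP/eqP => [|->]; last exact: dot0l.
rewrite dotE => /(psumr_eq0P _) aa0; apply/matrixP => i j; rewrite (ord1 j) mxE.
have /eqP := aa0 (fun k _ => sqr_ge0 (a k 0)) i isT.
by rewrite mulf_eq0 orbb => /eqP.
Qed.

(* Expand [0 <= |A b - B a|^2] with [A = a.a], [B = a.b]. *)
Lemma dot_sqr_le a b : dot a b ^+ 2 <= dot a a * dot b b.
Proof.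
have [->|a_neq0] := eqVneq a 0; first by rewrite !dot0l expr0n mul0r.
have aa_gt0 : 0 < dot a a by rewrite lt_def dot_self_eq0 a_neq0 dot_self_ge0.
have := dot_self_ge0 (dot a a *: b - dot a b *: a).
rewrite !(dotDl, dotDr, dotNl, dotNr, dotZl, dotZr) (dotC b a).
nra.
Qed.

Section PowerStepBound.
Variables (M : 'M[R]_d) (w : 'cV[R]_d) (s K : R).
Hypotheses (M_sym : M^T = M) (w_unit : dot w w = 1).
Hypothesis quad_le : forall v, `|dot v (M *m v)| <= K * dot v v.
Hypothesis small_step : `|s| * K <= 1 / 2.
Let q := dot w (M *m w).
Let u := w + s *: (M *m w).
Let v := M *m w - q *: w.

Let sq_le : `|s * q| <= 1 / 2.
Proof.
apply: le_trans small_step; rewrite normrM ler_wpM2l //.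
by have := quad_le w; rewrite w_unit mulr1.
Qed.

Let sv_le : `|s * dot v (M *m v)| <= 1 / 2 * dot v v.
Proof.
rewrite normrM (le_trans (ler_wpM2l _ (quad_le v))) // mulrA.
by rewrite ler_wpM2r // dot_self_ge0.
Qed.

Lemma power_step_dot_self_gt0 : 0 < dot u u.
Proof.
rewrite power_step_dot_self // -/q -/v; move: sq_le; rewrite ler_norml => /andP[sq_ge _].
have := mulr_ge0 (sqr_ge0 s) (dot_self_ge0 v); nra.
Qed.

Lemma power_step_rayleigh_ge0 : 0 <= s * (dot u (M *m u) - q * dot u u).
Proof.
rewrite power_step_rayleigh // -/q -/v mulrA -expr2 mulr_ge0 ?sqr_ge0 //.
move: sq_le sv_le; rewrite !ler_norml => /andP[sq_ge _] /andP[sv_ge _].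
have v_ge0 := dot_self_ge0 v.
have : 0 <= (s * q + 1 / 2) * dot v v by rewrite mulr_ge0 //; lra.
nra.
Qed.

End PowerStepBound.
End DotOrder.

Section Norm2.
Variables (R : realType) (d : nat).
Implicit Types (a b v w : 'cV[R]_d) (M : 'M[R]_d).

Lemma norm2E v : norm2 v = Num.sqrt (dot v v).
Proof. by rewrite /norm2 dotE; congr Num.sqrt; apply: eq_bigr => i _; rewrite expr2. Qed.

Lemma norm2_ge0 v : 0 <= norm2 v.
Proof. exact: sqrtr_ge0. Qed.

Lemma sqr_norm2 v : norm2 v ^+ 2 = dot v v.
Proof. by rewrite norm2E sqr_sqrtr // dot_self_ge0. Qed.

Lemma norm2_gt0 v : v != 0 -> 0 < norm2 v.
Proof. by move=> v_neq0; rewrite norm2E sqrtr_gt0 lt_def dot_self_eq0 v_neq0 dot_self_ge0. Qed.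

Lemma norm2Z k v : norm2 (k *: v) = `|k| * norm2 v.
Proof. by rewrite !norm2E dotZl dotZr mulrA -expr2 sqrtrM ?sqr_ge0 // sqrtr_sqr. Qed.

Lemma norm2_normalize v : v != 0 -> norm2 ((norm2 v)^-1 *: v) = 1.
Proof.
move=> /norm2_gt0 v_gt0.
by rewrite norm2Z ger0_norm ?invr_ge0 ?ltW // mulVf // gt_eqF.
Qed.

Lemma cauchy_schwarz a b : `|dot a b| <= norm2 a * norm2 b.
Proof.
rewrite -sqrtr_sqr !norm2E -sqrtrM ?dot_self_ge0 //.
exact: ler_wsqrtr (dot_sqr_le _ _).
Qed.

Lemma rayqE M w : rayq M w = dot w (M *m w).
Proof. by rewrite /rayq /dot mulmxA. Qed.

Lemma norm2_mulmx_unit_le M v : norm2 v = 1 -> norm2 (M *m v) <= opnorm2 M.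
Proof.
move=> v_unit; apply: ub_le_sup; last by exists v.
(* By Cauchy-Schwarz on each row, the Frobenius norm of [M] is an upper bound. *)
exists (Num.sqrt (\sum_i dot (row i M)^T (row i M)^T)).
rewrite /ubound /= => _ [u u_unit <-].
have uu1 : dot u u = 1 by rewrite -sqr_norm2 u_unit expr1n.
rewrite norm2E; apply: ler_wsqrtr; rewrite dotE; apply: ler_sum => i _.
have -> : (M *m u) i 0 = dot (row i M)^T u by rewrite /dot trmxK -row_mul [RHS]mxE.
by rewrite -expr2 -[X in _ <= X]mulr1 -uu1 dot_sqr_le.
Qed.

Lemma norm2_mulmx_le M v : norm2 (M *m v) <= opnorm2 M * norm2 v.
Proof.
have [->|v_neq0] := eqVneq v 0.
  by rewrite mulmx0 !norm2E dot0l sqrtr0 mulr0.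
have v_gt0 := norm2_gt0 v_neq0.
have := norm2_mulmx_unit_le M (norm2_normalize v_neq0).
rewrite -scalemxAr norm2Z ger0_norm ?invr_ge0 ?norm2_ge0 //.
by rewrite ler_pdivrMl // mulrC.
Qed.

Lemma quad_form_le M v : `|dot v (M *m v)| <= opnorm2 M * dot v v.
Proof.
rewrite -sqr_norm2 expr2 mulrA mulrAC (le_trans (cauchy_schwarz _ _)) //.
by rewrite mulrC ler_wpM2r ?norm2_ge0 ?norm2_mulmx_le.
Qed.

(* The normalisation divides [u.Mu - q u.u] by [u.u > 0]. *)
Lemma rayq_power_step M w s : M^T = M -> norm2 w = 1 -> `|s| * opnorm2 M <= 1 / 2 ->
  let u := w + s *: (M *m w) in let w' := (norm2 u)^-1 *: u in
  norm2 w' = 1 /\ 0 <= s * (rayq M w' - rayq M w).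
Proof.
move=> M_sym w_unit small_step u w'.
have ww1 : dot w w = 1 by rewrite -sqr_norm2 w_unit expr1n.
have uu_gt0 := power_step_dot_self_gt0 ww1 (quad_form_le M) small_step.
have u_neq0 : u != 0 by rewrite -dot_self_eq0 gt_eqF.
split; first exact: norm2_normalize.
have := power_step_rayleigh_ge0 M_sym ww1 (quad_form_le M) small_step.
rewrite !rayqE /w' -scalemxAr dotZl dotZr mulrA -expr2 exprVn sqr_norm2 -/u.
move: (dot u u) uu_gt0 => n n_gt0 h.
have -> : s * (n^-1 * dot u (M *m u) - dot w (M *m w)) =
          n^-1 * (s * (dot u (M *m u) - dot w (M *m w) * n)).
  by field; rewrite gt_eqF.
by rewrite mulr_ge0 // invr_ge0 ltW.
Qed.

End Norm2.

Lemma sgr_mul_sgr_gt0 (R : realDomainType) (z y : R) :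
  0 < Num.sg z * y -> Num.sg y = Num.sg z.
Proof.
case: sgrP => _; rewrite ?mul0r ?ltxx // ?mul1r ?mulN1r ?oppr_gt0 => y_sign.
  by rewrite gtr0_sg.
by rewrite ltr0_sg.
Qed.

Lemma mul_sign_clip1 (R : realType) (e z : R) : e ^+ 2 = 1 -> 0 < e * z ->
  e * clip1 z = Num.min 1 (e * z).
Proof.
move=> /eqP; rewrite sqrf_eq1 => /orP[] /eqP -> ez_gt0;
  rewrite ?mul1r ?mulN1r in ez_gt0 *; rewrite /clip1 !(minEle, maxEle);
  by repeat case: ifPn; rewrite ?leNgt ?negbK; lra.
Qed.

Lemma posp_ge0 (R : realType) (z : R) : 0 <= posp z.
Proof. by rewrite /posp le_max lexx orbT. Qed.

Lemma le_posp (R : realType) (z : R) : z <= posp z.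
Proof. by rewrite /posp le_max lexx. Qed.

Lemma Mhat_sym (R : realType) d N (hd : (1 < d)%N) (x : 'I_N -> 'cV[R]_d) :
  (Mhat hd x)^T = Mhat hd x.
Proof.
rewrite /Mhat linearZ /= linear_sum; congr (_ *: _); apply: eq_bigr => s _.
by rewrite linearZ /= trmx_mul trmxK.
Qed.

Section Phase1Dynamics.
Variables (R : realType) (d : nat) (M : 'M[R]_d) (w0 : 'cV[R]_d).
Variables (alpha a_star q_star e a0 : R).
Hypotheses (M_sym : M^T = M) (w0_unit : norm2 w0 = 1).
Hypotheses (alpha_gt0 : 0 < alpha) (a_star_le1 : a_star <= 1).
Hypothesis stable : alpha * a_star * opnorm2 M <= 1 / 2.
Hypotheses (e_sign : e ^+ 2 = 1) (q_star_gt0 : 0 < q_star).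
Hypotheses (a0_aligned : 0 < e * a0) (q0_ge : q_star <= e * q_ M alpha a0 w0 0).

Local Notation a := (a_ M alpha a0 w0).
Local Notation w := (w_ M alpha a0 w0).
Local Notation q := (q_ M alpha a0 w0).

Let e_norm : `|e| = 1.
Proof. by apply/eqP; rewrite -sqr_norm_eq1 e_sign. Qed.

Let mul_e_le_norm y : e * y <= `|y|.
Proof. by rewrite (le_trans (ler_norm _)) // normrM e_norm mul1r. Qed.

Let incr_gt0 : 0 < alpha / 2 * q_star.
Proof. by rewrite mulr_gt0 ?divr_gt0. Qed.

Lemma phase1_q_step t : norm2 (w t) = 1 -> `|a t| < a_star -> 0 < e * a t ->
  norm2 (w t.+1) = 1 /\ e * q t <= e * q t.+1.
Proof.
move=> w_unit a_lt ea_gt0.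
have small_step : `|alpha * a t| * opnorm2 M <= 1 / 2.
  apply: le_trans stable; rewrite normrM gtr0_norm // -!mulrA ler_pM2l //.
  apply: ler_wpM2r (ltW a_lt).
  by apply: le_trans (norm2_mulmx_unit_le M w0_unit); apply: norm2_ge0.
have [w'_unit step_ge0] := rayq_power_step M_sym w_unit small_step.
have dq_ge0 : 0 <= alpha * a t * (q t.+1 - q t) := step_ge0.
split => //; rewrite -subr_ge0 -mulrBr -(pmulr_rge0 _ (mulr_gt0 alpha_gt0 ea_gt0)).
have -> : alpha * (e * a t) * (e * (q t.+1 - q t)) = e ^+ 2 * (alpha * a t * (q t.+1 - q t)).
  by ring.
by rewrite e_sign mul1r.
Qed.

Lemma phase1_a_step t : 0 < e * a t -> q_star <= e * q t -> `|a t.+1| < a_star ->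
  e * a t + alpha / 2 * q_star <= e * a t.+1.
Proof.
move=> ea_gt0 eq_ge a_lt.
have incr_ge : alpha / 2 * q_star <= e * (alpha / 2 * q t).
  by rewrite mulrCA ler_pM2l // divr_gt0.
have z_gt0 : 0 < e * (a t + alpha / 2 * q t) by rewrite mulrDr; have := incr_gt0; lra.
have ea_next : e * a t.+1 = Num.min 1 (e * (a t + alpha / 2 * q t)).
  exact: mul_sign_clip1 e_sign z_gt0.
have ea_lt1 : e * a t.+1 < 1.
  by rewrite (le_lt_trans (mul_e_le_norm _)) // (lt_le_trans a_lt).
move: ea_lt1; rewrite ea_next gt_min ltxx /= => z_lt1.
by rewrite (min_idPr (ltW z_lt1)) mulrDr lerD2l.
Qed.

Lemma phase1_invariant t : (forall s, (s <= t)%N -> `|a s| < a_star) ->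
  [/\ norm2 (w t) = 1, 0 < e * a t, e * q 0 <= e * q t
     & e * a0 + t%:R * (alpha / 2 * q_star) <= e * a t].
Proof.
elim: t => [|t IH] a_lt; first by split; rewrite ?mul0r ?addr0.
have [w_unit ea_gt0 eq_ge ea_ge] := IH (fun s s_le => a_lt s (leqW s_le)).
have [w'_unit eq_step] := phase1_q_step w_unit (a_lt t (leqnSn t)) ea_gt0.
have ea_step := phase1_a_step ea_gt0 (le_trans q0_ge eq_ge) (a_lt t.+1 (leqnn _)).
have incr_pos := incr_gt0.
split => //; [lra | exact: le_trans eq_step | rewrite -natr1 mulrDl mul1r; lra].
Qed.

Lemma phase1_exit_time : exists T, a_star <= `|a T| /\
  (T%:Z <= Num.ceil (2 * posp (a_star - e * a0) / (alpha * q_star)))%R.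
Proof.
set r := 2 * posp (a_star - e * a0) / (alpha * q_star).
have r_ge0 : 0 <= r by rewrite /r divr_ge0 ?mulr_ge0 ?posp_ge0 // ltW.
set n := `|Num.ceil r|%N.
have n_ceil : n%:Z = Num.ceil r by rewrite gez0_abs // ceil_ge0 (lt_le_trans _ r_ge0) ?ltrN10.
have [/hasP[T] | /hasPn a_lt] := boolP (has (fun T => a_star <= `|a T|) (iota 0 n.+1)).
  by rewrite mem_iota ltnS => /andP[_ T_le] exit; exists T; rewrite -n_ceil lez_nat.
have a_lt' s : (s <= n)%N -> `|a s| < a_star.
  by move=> s_le; rewrite ltNge a_lt // mem_iota ltnS.
have [_ _ _ ea_ge] := phase1_invariant a_lt'.
have r_le_n : r <= n%:R by rewrite (le_trans (ceil_ge r)) // -n_ceil.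
have r_incr : r * (alpha / 2 * q_star) = posp (a_star - e * a0).
  by rewrite /r; field; rewrite !gt_eqF.
have := ler_wpM2r (ltW incr_gt0) r_le_n; rewrite r_incr.
have := le_posp (a_star - e * a0); have := mul_e_le_norm (a n); have := a_lt' n (leqnn n).
lra.
Qed.

End Phase1Dynamics.

Unset Implicit Arguments. Set Strict Implicit.

Theorem lemma7 (R : realType) (d N : nat) (hd : (1 < d)%N) (hN : (0 < N)%N)
    (x : 'I_N -> 'cV[R]_d) (hx : pm1_samples x)
    (alpha a_star c0 a0 : R) (w0 : 'cV[R]_d)
    (halpha : 0 < alpha) (ha1 : 0 < a_star) (ha2 : a_star <= 1) (hc0 : 0 < c0)
    (hw0 : norm2 w0 = 1) :
  let M := Mhat hd x in
  let a := a_ M alpha a0 w0 in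
  let q := q_ M alpha a0 w0 in
  let q_star := c0 / Num.sqrt (N%:R) in
  Num.sg a0 = Num.sg (q 0%N) ->
  q_star <= `|q 0%N| ->
  alpha * a_star * opnorm2 M <= 1 / 2 ->
  (* for all t < T_star, i.e. |a_s| < a_star for all s <= t *)
  (forall t : nat, (forall s : nat, (s <= t)%N -> `|a s| < a_star) ->
     [/\ Num.sg (a t) = Num.sg (q 0%N), Num.sg (q t) = Num.sg (q 0%N)
       & `|q 0%N| <= `|q t| ]) /\
  (* T_star exists and T_star <= ceil(2 (a_star - |a_0|)_+ / (alpha q_star)) *)
  (exists T : nat, a_star <= `|a T| /\
     (T%:Z <= Num.ceil (2 * posp (a_star - `|a0|) / (alpha * q_star)))%R).
Proof.
move=> M a q q_star sg_a0 q0_ge stable.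
set e := Num.sg (q 0%N).
have q_star_gt0 : 0 < q_star by rewrite divr_gt0 // sqrtr_gt0 ltr0n.
have q0_neq0 : q 0%N != 0 by rewrite -normr_gt0 (lt_le_trans q_star_gt0).
have e_sign : e ^+ 2 = 1 by rewrite sqr_sg q0_neq0.
have a0_neq0 : a0 != 0 by rewrite -sgr_eq0 sg_a0 sgr_eq0.
have ea0 : e * a0 = `|a0| by rewrite /e -sg_a0 -normrEsg.
have eq0 : e * q 0%N = `|q 0%N| by rewrite -normrEsg.
have a0_aligned : 0 < e * a0 by rewrite ea0 normr_gt0.
rewrite -eq0 in q0_ge.
have dynamics := phase1_invariant (Mhat_sym hd x) hw0 halpha ha2 stable e_sign
  q_star_gt0 a0_aligned q0_ge.
split.
  move=> t /dynamics[_ ea_gt0 eq_ge _].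
  have eq_gt0 : 0 < e * q t by rewrite (lt_le_trans _ eq_ge) // eq0 normr_gt0.
  have sg_qt := sgr_mul_sgr_gt0 eq_gt0.
  by rewrite (sgr_mul_sgr_gt0 ea_gt0) sg_qt -eq0 [`|q t|]normrEsg sg_qt.
rewrite -ea0.
exact: phase1_exit_time (Mhat_sym hd x) hw0 halpha ha2 stable e_sign q_star_gt0
  a0_aligned q0_ge.
Qed.
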